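(* Let $F$ be a distribution function whose hazard rate $h$ satisfies (H) and is regularly varying of index $-1$. Then for all positive numbers $a,b,c$, $$\overline F(t/a)\,\overline F(t/b)=o\big(\overline F(t/c)\big)\qquad(t\to\infty),$$ i.e. $\overline{\mathsf M_aF}\,\overline{\mathsf M_bF}=o(\overline{\mathsf M_cF})$.
   Context: For a distribution function $F$, $\overline F=1-F$, and for $c>0$, $\mathsf M_cF$ is the distribution of $cY$ with $Y\sim F$, so $\overline{\mathsf M_cF}(t)=\overline F(t/c)$. The hazard rate is $h=F'/\overline F$, assumed to exist for all large $t$, so that $\overline F(t)=\overline F(t_0)\exp(-\int_{t_0}^th(u)\,du)$. Condition (H): $h$ is regularly varying, $\lim_{t\to\infty}th(t)=+\infty$, $\lim_{t\to\infty}h(t)=0$. *)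

From Stdlib Require Import Reals.
From Coquelicot Require Import Coquelicot.
Open Scope R_scope.

Definition distribution_function (F : R -> R) : Prop :=
  (forall x y, x <= y -> F x <= F y) /\
  (forall x, filterlim F (at_right x) (locally (F x))) /\
  is_lim F m_infty 0 /\
  is_lim F p_infty 1.

Definition Fbar (F : R -> R) : R -> R := fun t => 1 - F t.

(* M_c F : distribution of cY, Y ~ F  (c > 0), i.e. (M_c F)(t) = F(t/c). *)
Definition Mc (c : R) (F : R -> R) : R -> R := fun t => F (t / c).

Definition hazard_rate (F h : R -> R) : Prop :=
  exists t0 : R, forall t, t0 <= t ->
    ex_derive F t /\ 0 < Fbar F t /\ h t = Derive F t / Fbar F t /\
    ex_RInt h t0 t /\ Fbar F t = Fbar F t0 * exp (- RInt h t0 t).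

Definition regularly_varying (rho : R) (h : R -> R) : Prop :=
  (exists t1 : R, forall t, t1 < t -> 0 < h t) /\
  (forall x, 0 < x -> is_lim (fun t => h (x * t) / h t) p_infty (Rpower x rho)).

Definition condition_H (h : R -> R) : Prop :=
  (exists rho : R, regularly_varying rho h) /\
  is_lim (fun t => t * h t) p_infty p_infty /\
  is_lim h p_infty 0.

Definition little_o_infty (f g : R -> R) : Prop :=
  forall eps : R, 0 < eps ->
    exists M : R, forall t, M < t -> Rabs (f t) <= eps * Rabs (g t).

From Stdlib Require Import Reals Lra Lia.
From Coquelicot Require Import Coquelicot.
Open Scope R_scope.

(* Write [Fbar F x = K exp (- H x)] with [H x = RInt h T0 x].  Putting [t = c s],
   the claim becomes [H (c/a s) + H (c/b s) - H s -> +oo].  Regular variation of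
   index -1 makes the integrals of [h] over the geometric blocks
   [[g^(k+1) s, g^k s]] asymptotically equal, so [RInt h (g s) s = o (H s)] and
   [H (g s) >= 3/4 H s] eventually; and [t h t -> +oo] forces [H s -> +oo].
   Hence [H (c/a s) + H (c/b s) - H s >= H s / 2 -> +oo]. *)

Lemma pow_le_pow_le1 (g : R) (k n : nat) :
  0 <= g <= 1 -> (k <= n)%nat -> g ^ n <= g ^ k.
Proof.
  intros Hg Hkn. replace n with (k + (n - k))%nat by lia. rewrite pow_add.
  pose proof (pow_le g k ltac:(lra)).
  pose proof (pow_incr g 1 (n - k) Hg) as Hle. rewrite pow1 in Hle.
  pose proof (pow_le g (n - k) ltac:(lra)). nra.
Qed.

Lemma Rpower_m1 (x : R) : 0 < x -> Rpower x (-1) = / x.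
Proof.
  intros Hx. replace (-1) with (- (1)) by ring.
  rewrite Rpower_Ropp, Rpower_1 by exact Hx. reflexivity.
Qed.

Lemma eventually_ge (T : R) : Rbar_locally p_infty (fun s => T <= s).
Proof. exists T. intros s Hs. lra. Qed.

Lemma eventually_scale (g : R) (P : R -> Prop) :
  0 < g -> Rbar_locally p_infty P -> Rbar_locally p_infty (fun s => P (g * s)).
Proof.
  intros Hg [M HM]. exists (M / g). intros s Hs. apply HM.
  apply Rmult_lt_compat_l with (r := g) in Hs; [|exact Hg].
  replace (g * (M / g)) with M in Hs by (field; lra). exact Hs.
Qed.

Lemma hazard_rate_integrated (F h : R -> R) (t1 : R) :
  hazard_rate F h -> exists T0, t1 < T0 /\
    (forall u v, T0 <= u -> u <= v -> ex_RInt h u v) /\ 0 < Fbar F T0 /\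
    (forall x, T0 <= x -> Fbar F x = Fbar F T0 * exp (- RInt h T0 x)).
Proof.
  intros [t0 HR]. exists (Rmax t0 t1 + 1).
  set (T0 := Rmax t0 t1 + 1). pose proof (Rmax_l t0 t1). pose proof (Rmax_r t0 t1).
  assert (Hint : forall u v, t0 <= u -> u <= v -> ex_RInt h u v).
  { intros u v Hu Huv. destruct (HR v ltac:(lra)) as [_ [_ [_ [Hv _]]]].
    exact (ex_RInt_Chasles_2 h t0 u v ltac:(lra) Hv). }
  destruct (HR T0 ltac:(unfold T0; lra)) as [_ [HK [_ [HiT HFT]]]].
  split; [unfold T0; lra|split; [intros u v Hu; apply Hint; unfold T0 in Hu; lra|]].
  split; [exact HK|]. intros x HTx.
  destruct (HR x ltac:(unfold T0 in HTx; lra)) as [_ [_ [_ [_ HFx]]]].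
  rewrite HFx, HFT, Rmult_assoc, <- exp_plus.
  rewrite <- (RInt_Chasles h t0 T0 x HiT (Hint T0 x ltac:(unfold T0; lra) HTx)).
  f_equal. f_equal. change plus with Rplus. ring.
Qed.

Lemma exp_gap_le (K eps A B C : R) : 0 < K -> 0 < eps -> K / eps <= A + B - C ->
  K * exp (- A) * (K * exp (- B)) <= eps * (K * exp (- C)).
Proof.
  intros HK Heps Hgap. set (X := A + B - C) in Hgap.
  assert (Hsplit : K * exp (- A) * (K * exp (- B)) = K * exp (- X) * (K * exp (- C))).
  { assert (E : exp (- A) * exp (- B) = exp (- X) * exp (- C))
      by (rewrite <- !exp_plus; f_equal; unfold X; ring).
    transitivity (K * K * (exp (- A) * exp (- B))); [ring|rewrite E; ring]. }
  (* [eps exp X >= eps (1 + X) >= K] *)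
  assert (HKX : K * exp (- X) <= eps).
  { assert (Hq : 0 < K / eps) by (apply Rdiv_lt_0_compat; lra).
    pose proof (exp_ineq1 X ltac:(lra)).
    assert (HK' : K <= eps * exp X).
    { replace K with (eps * (K / eps)) at 1 by (field; lra). nra. }
    rewrite exp_Ropp. pose proof (exp_pos X).
    apply Rmult_le_reg_r with (exp X); [lra|].
    rewrite Rmult_assoc, Rinv_l by lra. lra. }
  rewrite Hsplit. apply Rmult_le_compat_r; [|exact HKX].
  pose proof (exp_pos (- C)). nra.
Qed.

Section Integrated_hazard.

Variables (h : R -> R) (T0 : R).
Hypothesis h_pos : forall x, T0 <= x -> 0 < h x.
Hypothesis h_int : forall u v, T0 <= u -> u <= v -> ex_RInt h u v.

Lemma RInt_h_Chasles (u v w : R) : T0 <= u -> u <= v -> v <= w ->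
  RInt h u v + RInt h v w = RInt h u w.
Proof.
  intros Hu Huv Hvw.
  exact (RInt_Chasles h u v w (h_int u v Hu Huv) (h_int v w ltac:(lra) Hvw)).
Qed.

Lemma RInt_h_ge0 (u v : R) : T0 <= u -> u <= v -> 0 <= RInt h u v.
Proof.
  intros Hu Huv. apply RInt_ge_0; [exact Huv| apply h_int; lra|].
  intros x Hx. left. apply h_pos. lra.
Qed.

Lemma RInt_h_le_upper (u v : R) : T0 <= u -> u <= v -> RInt h T0 u <= RInt h T0 v.
Proof.
  intros Hu Huv. rewrite <- (RInt_h_Chasles T0 u v) by lra.
  pose proof (RInt_h_ge0 u v Hu Huv). lra.
Qed.

Lemma RInt_h_dilate (g eps U u v : R) : 0 < g ->
  (forall x, U <= x -> (1 - eps) * h x <= g * h (g * x)) ->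
  U <= u -> u <= v -> T0 <= u -> T0 <= g * u ->
  (1 - eps) * RInt h u v <= RInt h (g * u) (g * v).
Proof.
  intros Hg Hdil HU Huv HTu HTgu.
  assert (Hgi : ex_RInt h (g * u + 0) (g * v + 0)).
  { rewrite !Rplus_0_r. apply h_int; [exact HTgu|]. apply Rmult_le_compat_l; lra. }
  assert (Hi : ex_RInt h u v) by (apply h_int; lra).
  replace (RInt h (g * u) (g * v)) with (RInt h (g * u + 0) (g * v + 0))
    by (rewrite !Rplus_0_r; reflexivity).
  rewrite <- (RInt_comp_lin h g 0 u v Hgi).
  change ((1 - eps) * RInt h u v) with (scal (1 - eps) (RInt h u v)).
  rewrite <- (RInt_scal h u v (1 - eps) Hi).
  apply RInt_le; [exact Huv| exact (ex_RInt_scal h u v (1 - eps) Hi)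
                 | exact (ex_RInt_comp_lin h g 0 u v Hgi)|].
  intros x Hx. rewrite Rplus_0_r. exact (Hdil x ltac:(lra)).
Qed.

Section Geometric_blocks.

Variables (g eps U s : R) (n : nat).
Hypothesis g01 : 0 < g < 1.
Hypothesis eps01 : 0 <= eps <= 1.
Hypothesis h_dilate : forall x, U <= x -> (1 - eps) * h x <= g * h (g * x).
Hypothesis s_pos : 0 < s.
Hypothesis s_large : Rmax U T0 <= g ^ n * s.

Let geom_le (k m : nat) : (k <= m)%nat -> g ^ m * s <= g ^ k * s.
Proof.
  intros Hkm. apply Rmult_le_compat_r; [lra|]. apply pow_le_pow_le1; [lra|exact Hkm].
Qed.

Let geom_large (k : nat) : (k <= n)%nat -> U <= g ^ k * s /\ T0 <= g ^ k * s.
Proof.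
  intros Hk. pose proof (geom_le k n Hk).
  pose proof (Rmax_l U T0). pose proof (Rmax_r U T0). lra.
Qed.

Let first_block_ge0 : (1 <= n)%nat -> 0 <= RInt h (g * s) s.
Proof.
  intros Hn. destruct (geom_large 1 Hn) as [_ HT]. pose proof (geom_le 0 1 ltac:(lia)).
  simpl in *. rewrite Rmult_1_r in *. apply RInt_h_ge0; lra.
Qed.

Lemma RInt_geometric_block (k : nat) : (k < n)%nat ->
  (1 - INR k * eps) * RInt h (g * s) s <= RInt h (g ^ S k * s) (g ^ k * s).
Proof.
  intros Hk. pose proof (first_block_ge0 ltac:(lia)) as HJ0.
  induction k as [|k IH].
  - simpl. rewrite Rmult_0_l, Rminus_0_r, !Rmult_1_l, Rmult_1_r. apply Rle_refl.
  - specialize (IH ltac:(lia)).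
    destruct (geom_large (S k) ltac:(lia)) as [HU HT'].
    destruct (geom_large (S (S k)) ltac:(lia)) as [_ HT].
    pose proof (geom_le (S k) (S (S k)) ltac:(lia)).
    pose proof (geom_le k (S k) ltac:(lia)).
    assert (Hstep : (1 - eps) * RInt h (g ^ S k * s) (g ^ k * s)
                    <= RInt h (g ^ S (S k) * s) (g ^ S k * s)).
    { assert (E1 : g ^ S (S k) * s = g * (g ^ S k * s)) by (simpl; ring).
      assert (E2 : g ^ S k * s = g * (g ^ k * s)) by (simpl; ring).
      pose proof (RInt_h_dilate g eps U (g ^ S k * s) (g ^ k * s)) as D.
      rewrite <- E1, <- E2 in D. apply D; [lra|exact h_dilate|lra..]. }
    rewrite S_INR.
    set (J0 := RInt h (g * s) s) in *.
    set (Jk := RInt h (g ^ S k * s) (g ^ k * s)) in *.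
    (* [(1 - eps) (1 - k eps) >= 1 - (k + 1) eps], up to the nonnegative term [k eps^2]. *)
    assert (0 <= (1 - eps) * (Jk - (1 - INR k * eps) * J0)) by (apply Rmult_le_pos; lra).
    assert (0 <= INR k * (eps * eps) * J0).
    { apply Rmult_le_pos; [apply Rmult_le_pos; [apply pos_INR| nra]| lra]. }
    lra.
Qed.

Lemma RInt_geometric_blocks (m : nat) : (m <= n)%nat ->
  INR m * (1 - INR n * eps) * RInt h (g * s) s <= RInt h (g ^ m * s) s.
Proof.
  induction m as [|m IH]; intros Hm.
  - rewrite Rmult_0_l, Rmult_0_l, pow_O, Rmult_1_l, RInt_point. apply Rle_refl.
  - specialize (IH ltac:(lia)). pose proof (first_block_ge0 ltac:(lia)) as HJ0.
    pose proof (RInt_geometric_block m ltac:(lia)) as Hblock.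
    destruct (geom_large (S m) Hm) as [_ HT].
    pose proof (geom_le m (S m) ltac:(lia)).
    pose proof (geom_le 0 m ltac:(lia)) as Hs. rewrite pow_O, Rmult_1_l in Hs.
    rewrite <- (RInt_h_Chasles (g ^ S m * s) (g ^ m * s) s) by lra.
    rewrite S_INR.
    set (J0 := RInt h (g * s) s) in *.
    assert (INR m <= INR n) by (apply le_INR; lia).
    assert (0 <= (INR n - INR m) * eps * J0) by (apply Rmult_le_pos; [apply Rmult_le_pos|]; lra).
    lra.
Qed.

End Geometric_blocks.

Hypothesis h_rv : forall x, 0 < x -> is_lim (fun t => h (x * t) / h t) p_infty (/ x).

Lemma rv_dilate_eventually (g eps : R) : 0 < g -> 0 < eps ->
  exists U, forall x, U <= x -> (1 - eps) * h x <= g * h (g * x).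
Proof.
  intros Hg Heps. pose proof (h_rv g Hg) as L. apply is_lim_spec in L.
  assert (Hq : 0 < eps / g) by (apply Rdiv_lt_0_compat; lra).
  destruct (L (mkposreal _ Hq)) as [M HM]. simpl in HM.
  exists (Rmax M T0 + 1). intros x Hx.
  pose proof (Rmax_l M T0). pose proof (Rmax_r M T0).
  destruct (Rabs_def2 _ _ (HM x ltac:(lra))) as [_ Hlow].
  pose proof (h_pos x ltac:(lra)).
  set (r := h (g * x) / h x) in Hlow.
  assert (E : h (g * x) = r * h x) by (unfold r; field; lra).
  assert (g * (/ g - eps / g) = 1 - eps) by (field; lra).
  assert (g * r >= 1 - eps) by nra.
  rewrite E. nra.
Qed.

Lemma RInt_block_small (g : R) (n : nat) : 0 < g < 1 -> (1 <= n)%nat ->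
  Rbar_locally p_infty (fun s => INR n / 2 * RInt h (g * s) s <= RInt h T0 s).
Proof.
  intros Hg Hn.
  assert (Hn1 : 1 <= INR n) by (apply (le_INR 1); exact Hn).
  set (eps := / (2 * INR n)).
  assert (Heps : 0 < eps) by (apply Rinv_0_lt_compat; lra).
  assert (Hneps : INR n * eps = 1 / 2) by (unfold eps; field; lra).
  destruct (rv_dilate_eventually g eps ltac:(lra) Heps) as [U HU].
  pose proof (pow_lt g n ltac:(lra)) as Hgn.
  exists (Rmax 0 (Rmax U T0 / g ^ n)). intros s Hs.
  pose proof (Rmax_l 0 (Rmax U T0 / g ^ n)). pose proof (Rmax_r 0 (Rmax U T0 / g ^ n)).
  assert (Hlarge : Rmax U T0 <= g ^ n * s).
  { replace (Rmax U T0) with (g ^ n * (Rmax U T0 / g ^ n)) by (field; lra).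
    apply Rmult_le_compat_l; lra. }
  pose proof (RInt_geometric_blocks g eps U s n Hg ltac:(nra) HU ltac:(lra) Hlarge n (le_n n))
    as Hblocks.
  rewrite Hneps in Hblocks.
  pose proof (Rmax_r U T0).
  pose proof (pow_le_pow_le1 g 0 n ltac:(lra) ltac:(lia)). rewrite pow_O in *.
  rewrite <- (RInt_h_Chasles T0 (g ^ n * s) s) by nra.
  pose proof (RInt_h_ge0 T0 (g ^ n * s) ltac:(lra) ltac:(lra)).
  lra.
Qed.

Lemma RInt_h_unbounded : is_lim (fun t => t * h t) p_infty p_infty ->
  forall B, Rbar_locally p_infty (fun s => B <= RInt h T0 s).
Proof.
  intros Hth B. apply is_lim_spec in Hth. destruct (Hth 1) as [N HN].
  destruct (INR_unbounded (4 * Rabs B)) as [n Hn].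
  pose proof (Rabs_pos B). pose proof (Rle_abs B).
  assert (Hn1 : (1 <= n)%nat) by (destruct n; [simpl in Hn; lra| lia]).
  destruct (RInt_block_small (1 / 2) n ltac:(lra) Hn1) as [S HS].
  exists (Rmax S (2 * Rmax (Rmax N T0) 0 + 1)). intros s Hs.
  pose proof (Rmax_l S (2 * Rmax (Rmax N T0) 0 + 1)).
  pose proof (Rmax_r S (2 * Rmax (Rmax N T0) 0 + 1)).
  pose proof (Rmax_l (Rmax N T0) 0). pose proof (Rmax_r (Rmax N T0) 0).
  pose proof (Rmax_l N T0). pose proof (Rmax_r N T0).
  specialize (HS s ltac:(lra)).
  (* On [[s/2, s]], [h x >= 1 / x >= 1 / s]. *)
  assert (Hhalf : 1 / 2 <= RInt h (1 / 2 * s) s).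
  { replace (1 / 2) with ((s - 1 / 2 * s) * / s) at 1 by (field; lra).
    assert (Hconst : RInt (fun _ => / s) (1 / 2 * s) s = (s - 1 / 2 * s) * / s)
      by exact (RInt_const (1 / 2 * s) s (/ s)).
    rewrite <- Hconst.
    apply RInt_le; [lra| apply ex_RInt_const| apply h_int; lra|].
    intros x Hx. pose proof (HN x ltac:(lra)). pose proof (h_pos x ltac:(lra)).
    assert (0 < / s) by (apply Rinv_0_lt_compat; lra).
    assert (s * / s = 1) by (field; lra).
    nra. }
  assert (0 <= INR n * (RInt h (1 / 2 * s) s - 1 / 2)) by (apply Rmult_le_pos; [apply pos_INR| lra]).
  lra.
Qed.

Lemma RInt_h_dilate_ratio (g : R) : 0 < g ->
  Rbar_locally p_infty (fun s => 3 / 4 * RInt h T0 s <= RInt h T0 (g * s)).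
Proof.
  intros Hg. destruct (Rlt_or_le g 1) as [Hg1|Hg1].
  - destruct (RInt_block_small g 8 ltac:(lra) ltac:(lia)) as [S HS].
    exists (Rmax S (Rmax (T0 / g) 0)). intros s Hs.
    pose proof (Rmax_l S (Rmax (T0 / g) 0)). pose proof (Rmax_r S (Rmax (T0 / g) 0)).
    pose proof (Rmax_l (T0 / g) 0). pose proof (Rmax_r (T0 / g) 0).
    specialize (HS s ltac:(lra)). replace (INR 8 / 2) with 4 in HS by (simpl; field).
    assert (HT : T0 <= g * s).
    { replace T0 with (g * (T0 / g)) by (field; lra). apply Rmult_le_compat_l; lra. }
    rewrite <- (RInt_h_Chasles T0 (g * s) s) in HS |- * by nra.
    pose proof (RInt_h_ge0 T0 (g * s) ltac:(lra) HT). lra.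
  - exists (Rmax T0 0). intros s Hs.
    pose proof (Rmax_l T0 0). pose proof (Rmax_r T0 0).
    pose proof (RInt_h_ge0 T0 s ltac:(lra) ltac:(lra)).
    pose proof (RInt_h_le_upper s (g * s) ltac:(lra) ltac:(nra)). lra.
Qed.

Lemma RInt_h_gap_unbounded (al be : R) : 0 < al -> 0 < be ->
  is_lim (fun t => t * h t) p_infty p_infty -> forall B,
  Rbar_locally p_infty (fun s => B <= RInt h T0 (al * s) + RInt h T0 (be * s) - RInt h T0 s).
Proof.
  intros Hal Hbe Hth B.
  generalize (filter_and _ _ (RInt_h_dilate_ratio al Hal)
    (filter_and _ _ (RInt_h_dilate_ratio be Hbe) (RInt_h_unbounded Hth (2 * B)))).
  apply filter_imp. intros s [Hs_al [Hs_be Hs_big]]. lra.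
Qed.

End Integrated_hazard.

Theorem lemma4p3p1 (F h : R -> R) :
  distribution_function F ->
  hazard_rate F h ->
  condition_H h ->
  regularly_varying (-1) h ->
  forall a b c : R, 0 < a -> 0 < b -> 0 < c ->
    little_o_infty (fun t => Fbar (Mc a F) t * Fbar (Mc b F) t) (Fbar (Mc c F)).
Proof.
  intros _ Hhaz [_ [Hth _]] [[t1 Ht1] Hrv] a b c Ha Hb Hc eps Heps.
  destruct (hazard_rate_integrated F h t1 Hhaz) as [T0 [HT0 [h_int [HK Hrepr]]]].
  assert (h_pos : forall x, T0 <= x -> 0 < h x) by (intros; apply Ht1; lra).
  assert (h_rv : forall x, 0 < x -> is_lim (fun t => h (x * t) / h t) p_infty (/ x)).
  { intros x Hx. rewrite <- Rpower_m1 by exact Hx. exact (Hrv x Hx). }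
  set (K := Fbar F T0) in *.
  set (al := c / a). set (be := c / b).
  assert (Hal : 0 < al) by (apply Rdiv_lt_0_compat; lra).
  assert (Hbe : 0 < be) by (apply Rdiv_lt_0_compat; lra).
  assert (Hlarge : Rbar_locally p_infty (fun s => T0 <= al * s /\ T0 <= be * s /\ T0 <= s)).
  { repeat apply filter_and;
      [apply (eventually_scale al)| apply (eventually_scale be)|]; auto using eventually_ge. }
  pose proof (RInt_h_gap_unbounded h T0 h_pos h_int h_rv al be Hal Hbe Hth (K / eps)) as Hgap.
  destruct (eventually_scale (/ c) _ (Rinv_0_lt_compat c Hc) (filter_and _ _ Hlarge Hgap))
    as [M HM].
  exists M. intros t Ht. destruct (HM t Ht) as [[Hta [Htb Htc]] Hgapt].
  change (Rabs (Fbar F (t / a) * Fbar F (t / b)) <= eps * Rabs (Fbar F (t / c))).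
  replace (t / a) with (al * (/ c * t)) by (unfold al; field; lra).
  replace (t / b) with (be * (/ c * t)) by (unfold be; field; lra).
  replace (t / c) with (/ c * t) by (field; lra).
  rewrite (Hrepr _ Hta), (Hrepr _ Htb), (Hrepr _ Htc).
  rewrite !Rabs_pos_eq by (repeat apply Rmult_le_pos; left; auto using exp_pos).
  apply exp_gap_le; assumption.
Qed.
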